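(* Let $u, v_1, \ldots, v_n \in \mathcal{L}_s$. Then $u \leqslant_{\mathcal{L}} \max(v_1, \ldots, v_n)$ if and only if there exists $i$ such that $u \leqslant_{\mathcal{L}} v_i$.
   Context: $\mathcal{X}$ is a countable set of variables; a valuation is $\sigma\colon\mathcal{X}\to\mathbb{N}$. For finite $E\subseteq\mathcal{X}$, $x\in\mathcal{X}$, $S\in\mathbb{N}$, the sublevels $A(E,x,S)$ and $B(E,S)$ have values $[A(E,x,S)]_\sigma = 0$ if some $y\in E$ has $\sigma(y)=0$, and $\sigma(x)+S$ otherwise; $[B(E,S)]_\sigma=0$ if some $y\in E$ has $\sigma(y)=0$, and $S$ otherwise. $\mathcal{L}_s$ is the set of sublevels $A(E,x,S)$ with $x\in E$ and $B(E,S)$ with $S>0$. $\max$ of a finite family is evaluated pointwise (empty max has value $0$). $t_1\leqslant_{\mathcal{L}} t_2$ means $[t_1]_\sigma\le[t_2]_\sigma$ for every valuation $\sigma$. *)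

From mathcomp Require Import all_boot.
Set Implicit Arguments. Unset Strict Implicit. Unset Printing Implicit Defensive.

(* Variables: the countably infinite set X is represented by nat.
   Finite sets E of variables are represented by finite sequences (only
   membership matters). A valuation is sigma : nat -> nat. *)
Definition var := nat.
Definition valuation := var -> nat.

Inductive sublevel : Type :=
| SA (E : seq var) (x : var) (S : nat)
| SB (E : seq var) (S : nat).

Definition vanishes (sigma : valuation) (E : seq var) : bool :=
  has (fun y => sigma y == 0) E.

Definition eval (sigma : valuation) (t : sublevel) : nat :=
  match t with
  | SA E x s => if vanishes sigma E then 0 else sigma x + s
  | SB E s => if vanishes sigma E then 0 else s
  end.

Definition in_Ls (t : sublevel) : Prop :=
  match t with
  | SA E x _ => x \in E
  | SB _ s => 0 < s
  end.

(* pointwise max of a finite family v_0..v_{n-1}; empty max is 0 *)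
Definition eval_max (sigma : valuation) (n : nat) (v : 'I_n -> sublevel) : nat :=
  \max_(i < n) eval sigma (v i).

Definition leL (t1 t2 : sublevel) : Prop :=
  forall sigma : valuation, eval sigma t1 <= eval sigma t2.

Definition leL_max (u : sublevel) (n : nat) (v : 'I_n -> sublevel) : Prop :=
  forall sigma : valuation, eval sigma u <= eval_max sigma v.

From mathcomp Require Import all_boot zify.

Set Implicit Arguments.
Unset Strict Implicit.
Unset Printing Implicit Defensive.

(* Test u on a valuation that is positive on u and vanishes outside the
   variables E of u: the indicator of E when u = B(E, S), and, when
   u = A(E, x, S), the indicator of E with x raised above every constant of
   the v_i, so that only sublevels A(F, x, T) can reach sigma(x) + S. A
   sublevel reaching the positive value of u there does not vanish, so its
   variables lie in E, and this inclusion together with the comparison of the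
   constants gives u <=_L v. The maximum of the v_i is attained, so some v_i
   reaches the value of u. *)

Definition sublevel_const (t : sublevel) : nat :=
  match t with SA _ _ c | SB _ c => c end.

Section Vanishing.

Variable sigma : valuation.

Lemma vanishes_subset (E F : seq var) :
  {subset F <= E} -> vanishes sigma F -> vanishes sigma E.
Proof. by move=> sFE /hasP [y /sFE yE y0]; apply/hasP; exists y. Qed.

Lemma nonvanishing_subset (E F : seq var) :
  (forall y, y \notin E -> sigma y = 0) -> ~~ vanishes sigma F -> {subset F <= E}.
Proof.
by move=> off nvF y yF; apply: contraR nvF => yE; apply/hasP; exists y; rewrite ?off.
Qed.

Lemma nonvanishing_gt0 (E : seq var) y : ~~ vanishes sigma E -> y \in E -> 0 < sigma y.
Proof. by move=> nvE yE; rewrite lt0n; apply: contra nvE => y0; apply/hasP; exists y. Qed.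

End Vanishing.

Lemma leL_SA (E F : seq var) x S T :
  {subset F <= E} -> S <= T -> leL (SA E x S) (SA F x T).
Proof.
move=> sFE leST sigma /=; case: ifP => // /negbT nvE.
by rewrite ifN ?leq_add2l // (contra (vanishes_subset sFE)).
Qed.

Lemma leL_SB (E F : seq var) S T :
  {subset F <= E} -> S <= T -> leL (SB E S) (SB F T).
Proof.
move=> sFE leST sigma /=; case: ifP => // /negbT nvE.
by rewrite ifN // (contra (vanishes_subset sFE)).
Qed.

Lemma leL_SB_SA (E F : seq var) y S T :
  {subset F <= E} -> y \in F -> S <= T.+1 -> leL (SB E S) (SA F y T).
Proof.
move=> sFE yF leST sigma /=; case: ifP => // /negbT nvE.
have nvF := contra (vanishes_subset sFE) nvE.
by rewrite ifN //; have := nonvanishing_gt0 nvF yF; lia.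
Qed.

Definition peak (E : seq var) (x : var) (N : nat) : valuation :=
  fun y => if y \in E then (if y == x then N else 1) else 0.

Lemma peak_out (E : seq var) x N y : y \notin E -> peak E x N y = 0.
Proof. by rewrite /peak => /negbTE ->. Qed.

Lemma peak_in (E : seq var) x N y :
  y \in E -> peak E x N y = if y == x then N else 1.
Proof. by rewrite /peak => ->. Qed.

Lemma peak_nonvanishing (E : seq var) x N : 0 < N -> ~~ vanishes (peak E x N) E.
Proof. by move=> N0; apply/hasPn => y yE; rewrite peak_in // -lt0n; case: eqP. Qed.

Lemma peak_separates_SA (E : seq var) x S N v :
  x \in E -> in_Ls v -> sublevel_const v < N ->
  eval (peak E x N.+1) (SA E x S) <= eval (peak E x N.+1) v -> leL (SA E x S) v.
Proof.
move=> xE; rewrite /= ifN ?peak_nonvanishing // peak_in // eqxx.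
case: v => [F y T|F T] /= yF ltTN; case: ifP => [_|/negbT nvF]; try lia.
have sFE := nonvanishing_subset (@peak_out E x N.+1) nvF.
rewrite peak_in ?sFE //; case: eqP => [-> leST|_]; last lia.
by apply: leL_SA => //; lia.
Qed.

(* [peak E x 1] is the indicator of [E], whatever [x] is. *)
Lemma peak_separates_SB (E : seq var) S v :
  0 < S -> in_Ls v ->
  eval (peak E 0 1) (SB E S) <= eval (peak E 0 1) v -> leL (SB E S) v.
Proof.
move=> S0; rewrite /= ifN ?peak_nonvanishing //.
case: v => [F y T|F T] /= vLs; case: ifP => [_|/negbT nvF]; try lia.
- have sFE := nonvanishing_subset (@peak_out E 0 1) nvF.
  rewrite peak_in ?sFE // if_same => leST.
  by apply: leL_SB_SA => //; lia.
- exact/leL_SB/nonvanishing_subset/nvF/peak_out.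
Qed.

Lemma separating_valuation u N : in_Ls u ->
  exists sigma : valuation, 0 < eval sigma u /\
    forall v, in_Ls v -> sublevel_const v < N -> eval sigma u <= eval sigma v -> leL u v.
Proof.
case: u => [E x S|E S] /= uLs.
- exists (peak E x N.+1); split=> [|v]; last exact: peak_separates_SA uLs.
  by rewrite /= ifN ?peak_nonvanishing ?peak_in ?eqxx.
- exists (peak E 0 1); split=> [|v vLs _]; last exact: peak_separates_SB.
  by rewrite /= ifN ?peak_nonvanishing.
Qed.

Lemma bigmax_attained n (F : 'I_n -> nat) :
  0 < \max_(i < n) F i -> exists i, \max_(i < n) F i = F i.
Proof.
case: n F => [|n] F; first by rewrite big_ord0.
by case: (eq_bigmax F) => [|i ->]; [rewrite card_ord | exists i].
Qed.

Theorem lemma36 (u : sublevel) (n : nat) (v : 'I_n -> sublevel) :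
  in_Ls u -> (forall i : 'I_n, in_Ls (v i)) ->
  (leL_max u v <-> exists i : 'I_n, leL u (v i)).
Proof.
move=> uLs vLs; split=> [le_u_max | [i le_u_vi] sigma]; last first.
  exact: leq_trans (le_u_vi sigma) (leq_bigmax (F := fun j => eval sigma (v j)) i).
pose N := (\max_(i < n) sublevel_const (v i)).+1.
have [sigma [u_pos separates]] := separating_valuation N uLs.
have [i max_i] := bigmax_attained (leq_trans u_pos (le_u_max sigma)).
exists i; apply: separates => //.
  by rewrite ltnS (leq_bigmax (F := fun j => sublevel_const (v j))).
by rewrite -max_i; apply: le_u_max.
Qed.
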